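(* Let $0<\alpha'<2/9$, $0<\beta'<1/4$, with $\tfrac98\alpha'\ne\beta'$ and $\alpha'\neq\beta'$. Let $\mathcal{S}$ be the separability of the label-augmented model and $\mathcal{S}^{(u)}$ that of the self-supervised model. Then $\mathcal{S}-\mathcal{S}^{(u)}>0$, i.e., incorporating ID label information increases the separation between ID nodes and the semantic OOD node.
   Context: Two toy five-node models with nodes, in order: 1 = angel in sketch (ID, class angel), 2 = tiger in sketch (ID, class tiger), 3 = angel in painting (covariate OOD), 4 = tiger in painting (covariate OOD), 5 = panda (semantic OOD); parameters $\alpha'=\alpha/\rho$, $\beta'=\beta/\rho$ (first-order approximation of an augmentation graph with $\eta_u=5,\eta_l=1$). Label-augmented model: $M=\begin{pmatrix}1-2\beta'-\frac32\alpha'&2\beta'&\frac{3}{\sqrt2}\alpha'&0&0\\2\beta'&1-2\beta'-\frac32\alpha'&0&\frac3{\sqrt2}\alpha'&0\\\frac3{\sqrt2}\alpha'&0&1-2\beta'-3\alpha'&2\beta'&0\\0&\frac3{\sqrt2}\alpha'&2\beta'&1-2\beta'-3\alpha'&0\\0&0&0&0&1\end{pmatrix}$, $C=7+12\beta'+12\alpha'$, $\Delta=\sqrt{C}\,\mathrm{diag}\big(\tfrac{1}{\sqrt2}(1-\beta'-\tfrac34\alpha'),\tfrac1{\sqrt2}(1-\beta'-\tfrac34\alpha'),1-\beta'-\tfrac32\alpha',1-\beta'-\tfrac32\alpha',1\big)$. Self-supervised model: $M_u=\begin{pmatrix}1-2\beta'-2\alpha'&2\beta'&2\alpha'&0&0\\2\beta'&1-2\beta'-2\alpha'&0&2\alpha'&0\\2\alpha'&0&1-2\beta'-2\alpha'&2\beta'&0\\0&2\alpha'&2\beta'&1-2\beta'-2\alpha'&0\\0&0&0&0&1\end{pmatrix}$,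 $C_u=5+8\beta'+8\alpha'$, $\Delta_u=\sqrt{C_u}\,\mathrm{diag}(1-\beta'-\alpha',1-\beta'-\alpha',1-\beta'-\alpha',1-\beta'-\alpha',1)$. For a model $(M,\Delta)$: let $V$ have orthonormal columns spanning eigenvectors for the three largest eigenvalues of $M$, $\Sigma$ the diagonal matrix of those eigenvalues, $Z=\Delta V\Sigma^{1/2}$ with rows $z_i^\top$, and separability $\tfrac12(\|z_1-z_5\|_2^2+\|z_2-z_5\|_2^2)$. *)

From HB Require Import structures.
From mathcomp Require Import all_boot all_order all_algebra.
Set Implicit Arguments. Unset Strict Implicit. Unset Printing Implicit Defensive.
Import Order.TTheory GRing.Theory Num.Theory.
Local Open Scope ring_scope.

(* Nodes 1..5 of the paper are the ordinals 0..4 of 'I_5. *)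

Section Models.
Variable R : rcfType.

Definition M_lab (a b : R) : 'M[R]_5 :=
  \matrix_(i < 5, j < 5)
   match nat_of_ord i, nat_of_ord j with
   | 0, 0 | 1, 1 => 1 - 2 * b - 3 / 2 * a
   | 2, 2 | 3, 3 => 1 - 2 * b - 3 * a
   | 0, 1 | 1, 0 | 2, 3 | 3, 2 => 2 * b
   | 0, 2 | 2, 0 | 1, 3 | 3, 1 => 3 / Num.sqrt 2 * a
   | 4, 4 => 1
   | _, _ => 0
   end.

Definition C_lab (a b : R) : R := 7 + 12 * b + 12 * a.

Definition Delta_lab (a b : R) : 'M[R]_5 :=
  Num.sqrt (C_lab a b) *:
  diag_mx (\row_(i < 5)
    match nat_of_ord i with
    | 0 | 1 => 1 / Num.sqrt 2 * (1 - b - 3 / 4 * a)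
    | 2 | 3 => 1 - b - 3 / 2 * a
    | _ => 1
    end).

Definition M_ssl (a b : R) : 'M[R]_5 :=
  \matrix_(i < 5, j < 5)
   match nat_of_ord i, nat_of_ord j with
   | 0, 0 | 1, 1 | 2, 2 | 3, 3 => 1 - 2 * b - 2 * a
   | 0, 1 | 1, 0 | 2, 3 | 3, 2 => 2 * b
   | 0, 2 | 2, 0 | 1, 3 | 3, 1 => 2 * a
   | 4, 4 => 1
   | _, _ => 0
   end.

Definition C_ssl (a b : R) : R := 5 + 8 * b + 8 * a.

Definition Delta_ssl (a b : R) : 'M[R]_5 :=
  Num.sqrt (C_ssl a b) *:
  diag_mx (\row_(i < 5)
    match nat_of_ord i with
    | 0 | 1 | 2 | 3 => 1 - b - a
    | _ => 1
    end).

(* V (5x3) has orthonormal columns, M V = V diag(s) (so the columns are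
   eigenvectors with eigenvalues s), and s are the three largest eigenvalues
   of M (with multiplicity): every eigenvalue of M with an eigenvector
   orthogonal to the columns of V is <= every entry of s. *)
Definition top3_eigen (M : 'M[R]_5) (V : 'M[R]_(5, 3)) (s : 'rV[R]_3) : Prop :=
  [/\ V^T *m V = 1%:M,
      M *m V = V *m diag_mx s &
      forall (x : 'cV[R]_5) (mu : R),
        x != 0 -> V^T *m x = 0 -> M *m x = mu *: x ->
        forall k : 'I_3, mu <= s 0 k].

Definition Zmat (Delta : 'M[R]_5) (V : 'M[R]_(5, 3)) (s : 'rV[R]_3)
  : 'M[R]_(5, 3) :=
  Delta *m V *m diag_mx (\row_k Num.sqrt (s 0 k)).

Definition sqdist (Z : 'M[R]_(5, 3)) (i j : 'I_5) : R :=
  \sum_(k < 3) (Z i k - Z j k) ^+ 2.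

Definition separability (Delta : 'M[R]_5) (V : 'M[R]_(5, 3)) (s : 'rV[R]_3) : R :=
  let Z := Zmat Delta V s in
  1 / 2 * (sqdist Z (inord 0) (inord 4) + sqdist Z (inord 1) (inord 4)).

End Models.

From HB Require Import structures.
From mathcomp Require Import all_boot all_order all_algebra.
From mathcomp Require Import ring lra.
Import Order.TTheory GRing.Theory Num.Theory.
Set Implicit Arguments. Unset Strict Implicit. Unset Printing Implicit Defensive.
Local Open Scope ring_scope.

(* Both matrices [M] are diagonalised by explicit orthogonal matrices, and the
   hypotheses [9/8 a <> b], [a <> b] separate their three largest eigenvalues
   strictly from the other two.  Hence every admissible [(V, s)] spans the same
   top eigenspace: with [C = U^T V], the matrix [C C^T] is the coordinate
   projection onto the top indices, and [V diag(s) V^T] is the truncated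
   spectral sum [U diag(lam_top) U^T].  The separability depends on [(V, s)]
   only through this Gram matrix, which yields closed forms for both models;
   their difference is positive by an elementary estimate. *)

Section SymmetricIdempotent.
Variables (R : realDomainType) (n : nat) (Q : 'M[R]_n).
Hypotheses (Q_sym : Q^T = Q) (Q_idem : Q *m Q = Q).

Lemma sym_idem_diagE i : Q i i = Q i i ^+ 2 + \sum_(l | l != i) Q i l ^+ 2.
Proof.
rewrite -{1}Q_idem mxE (bigD1 i) //= expr2; congr (_ + _).
apply: eq_bigr => l _; rewrite expr2; congr (_ * _).
by rewrite -{1}Q_sym mxE.
Qed.

Lemma sym_idem_diag_bound i : 0 <= Q i i <= 1.
Proof.
have rest_ge0 : 0 <= \sum_(l | l != i) Q i l ^+ 2 by apply: sumr_ge0 => l _; apply: sqr_ge0.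
have Qii2_ge0 := sqr_ge0 (Q i i); have diagE := sym_idem_diagE i.
by apply/andP; split; nra.
Qed.

Lemma sym_idem_row_eq0 i l : Q i i = 1 -> l != i -> Q i l = 0.
Proof.
move=> Qii1 li; have := sym_idem_diagE i; rewrite Qii1 expr1n => diagE.
have /psumr_eq0P rest0 : \sum_(k | k != i) Q i k ^+ 2 = 0 by lra.
by apply/eqP; rewrite -sqrf_eq0; apply/eqP/rest0 => // k _; apply: sqr_ge0.
Qed.

End SymmetricIdempotent.

Section TopEigenspace.
Variables (R : realFieldType) (n r : nat) (M U : 'M[R]_n) (lam : 'rV[R]_n).
Variables (top : {pred 'I_n}) (V : 'M[R]_(n, r)) (s : 'rV[R]_r).
Hypotheses (U_orth : U^T *m U = 1%:M) (U_eig : M *m U = U *m diag_mx lam).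
Hypothesis card_top : #|top| = r.
Hypothesis lam_gap : forall i j, i \in top -> j \notin top -> lam 0 j < lam 0 i.
Hypotheses (V_orth : V^T *m V = 1%:M) (V_eig : M *m V = V *m diag_mx s).
Hypothesis V_top : forall (x : 'cV[R]_n) (mu : R),
  x != 0 -> V^T *m x = 0 -> M *m x = mu *: x -> forall k, mu <= s 0 k.

Let C := U^T *m V.
Let Q := C *m C^T.

Let U_orthC : U *m U^T = 1%:M. Proof. exact: mulmx1C. Qed.

Let V_coord : V = U *m C. Proof. by rewrite /C mulmxA U_orthC mul1mx. Qed.

Let coord_orth : C^T *m C = 1%:M.
Proof. by rewrite trmx_mul trmxK mulmxA -(mulmxA V^T) U_orthC mulmx1. Qed.

Let coord_eig : diag_mx lam *m C = C *m diag_mx s.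
Proof.
have UM : U^T *m M = diag_mx lam *m U^T.
  by rewrite -[LHS]mulmx1 -U_orthC !mulmxA -(mulmxA U^T) U_eig mulmxA U_orth mul1mx.
by rewrite /C mulmxA -UM -mulmxA V_eig mulmxA.
Qed.

Let coord_eigE j k : lam 0 j * C j k = C j k * s 0 k.
Proof. by move/matrixP: coord_eig => /(_ j k); rewrite mul_diag_mx mul_mx_diag !mxE. Qed.

Let proj_sym : Q^T = Q. Proof. by rewrite trmx_mul trmxK. Qed.

Let proj_idem : Q *m Q = Q.
Proof. by rewrite mulmxA -(mulmxA C) coord_orth mulmx1. Qed.

Let proj_diagE j : Q j j = \sum_k C j k ^+ 2.
Proof. by rewrite mxE; apply: eq_bigr => k _; rewrite [C^T _ _]mxE expr2. Qed.

Let proj_comm : diag_mx lam *m Q = Q *m diag_mx lam.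
Proof.
rewrite /Q mulmxA coord_eig -mulmxA -[RHS]mulmxA; congr (_ *m _).
by have := congr1 trmx coord_eig; rewrite !trmx_mul !tr_diag_mx.
Qed.

(* If [Q j j != 1], the [j]-th column of [U (1 - Q)] is an eigenvector for [lam j]
   orthogonal to the columns of [V], so [lam j] cannot exceed the [s k]. *)
Let proj_diag_eq1 j k : s 0 k < lam 0 j -> Q j j = 1.
Proof.
move=> s_lt; apply/eqP; apply: contraT => Qjj_neq1.
pose y := (1%:M - Q) *m delta_mx j (0 : 'I_1).
have yj : y j 0 = 1 - Q j j.
  rewrite /y !mxE (bigD1 j) //= big1 ?addr0 => [|i ij].
    by rewrite !mxE eqxx mulr1 mulr1n.
  by rewrite !mxE (negbTE ij) mulr0.
have y_neq0 : U *m y != 0.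
  apply/eqP => Uy0.
  have /matrixP/(_ j 0) : y = 0 by rewrite -[y]mul1mx -U_orth -mulmxA Uy0 mulmx0.
  by rewrite yj [(0 : 'cV_n) j 0]mxE => /eqP; rewrite subr_eq0 eq_sym (negbTE Qjj_neq1).
have y_orth : V^T *m (U *m y) = 0.
  have -> : V^T *m (U *m y) = C^T *m y by rewrite trmx_mul trmxK mulmxA.
  by rewrite /y mulmxA mulmxBr mulmx1 /Q mulmxA coord_orth mul1mx subrr mul0mx.
have y_eig : M *m (U *m y) = lam 0 j *: (U *m y).
  rewrite mulmxA U_eig -mulmxA scalemxAr; congr (U *m _).
  rewrite /y mulmxA mulmxBr mulmx1 proj_comm -[X in X - _]mul1mx -mulmxBl -mulmxA.
  rewrite scalemxAr; congr (_ *m _); apply/matrixP => i l.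
  by rewrite mul_diag_mx !mxE; case: eqVneq => [->|]; rewrite ?mulr1 ?mulr0.
by have := V_top y_neq0 y_orth y_eig k; rewrite leNgt s_lt.
Qed.

Let coord_eigenvalue j k : C j k != 0 -> s 0 k = lam 0 j.
Proof. by move=> Cjk; apply: (mulIf Cjk); rewrite mulrC -coord_eigE. Qed.

Let proj_trace : \tr Q = r%:R.
Proof. by rewrite /Q mxtrace_mulC coord_orth; apply: mxtrace1. Qed.

Let proj_trace_split : \sum_(i in top) Q i i + \sum_(i | i \notin top) Q i i = r%:R.
Proof. by rewrite -proj_trace /mxtrace [RHS](bigID (fun i => i \in top)). Qed.

(* A nonzero [C j k] off the top set would make [s k] smaller than every top
   eigenvalue; then all top diagonal entries of [Q] are [1], exhausting the trace. *)
Let coord_bottom j k : j \notin top -> C j k = 0.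
Proof.
move=> j_bot; apply/eqP; apply: contraT => Cjk.
have top1 : \sum_(i in top) Q i i = r%:R.
  rewrite -card_top -sumr_const; apply: eq_bigr => i i_top.
  by apply: (@proj_diag_eq1 i k); rewrite (coord_eigenvalue Cjk); apply: lam_gap.
have bot0 : \sum_(i | i \notin top) Q i i = 0.
  by move: proj_trace_split; rewrite top1; lra.
have /eqP : Q j j = 0.
  apply: (psumr_eq0P _ bot0) => // i _.
  by case/andP: (sym_idem_diag_bound proj_sym proj_idem i).
rewrite proj_diagE psumr_eq0 => [/allP/(_ k (mem_index_enum k))|l _]; last exact: sqr_ge0.
by rewrite sqrf_eq0 (negbTE Cjk).
Qed.

Let proj_top i : i \in top -> Q i i = 1.
Proof.
have bot0 : \sum_(i | i \notin top) Q i i = 0.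
  apply: big1 => j j_bot; rewrite proj_diagE big1 // => k _.
  by rewrite coord_bottom // expr0n.
have /psumr_eq0P top0 : \sum_(i in top) (1 - Q i i) = 0.
  by rewrite sumrB sumr_const card_top; move: proj_trace_split; rewrite bot0; lra.
move=> i_top; apply/eqP; rewrite eq_sym -subr_eq0; apply/eqP/top0 => // j _.
by rewrite subr_ge0; case/andP: (sym_idem_diag_bound proj_sym proj_idem j).
Qed.

Let projE : Q = diag_mx (\row_j (j \in top)%:R).
Proof.
apply/matrixP => i l; rewrite [RHS]mxE [_ 0 i]mxE.
case: (boolP (i \in top)) => [i_top|i_bot]; last first.
  by rewrite mxE big1 ?mul0rn // => k _; rewrite coord_bottom // mul0r.
case: eqVneq => [<-|li]; first by rewrite proj_top.
by rewrite mulr0n (sym_idem_row_eq0 proj_sym proj_idem (proj_top i_top)) // eq_sym.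
Qed.

Lemma gram_top_eigen :
  V *m diag_mx s *m V^T = U *m diag_mx (\row_j if j \in top then lam 0 j else 0) *m U^T.
Proof.
rewrite V_coord trmx_mul -!mulmxA; congr (U *m _); rewrite !mulmxA -coord_eig.
rewrite -(mulmxA _ C) -/Q projE; congr (_ *m _); apply/matrixP => i l.
by rewrite mul_diag_mx !mxE; case: eqVneq => [->|]; case: (l \in top); rewrite ?mulr1 ?mulr0.
Qed.

Lemma top_eigenvalue k : exists2 j, j \in top & s 0 k = lam 0 j.
Proof.
have [j /=] : exists j, true && (0 < C j k ^+ 2).
  apply: psumr_neq0P => [j _|]; first exact: sqr_ge0.
  rewrite (eq_bigr (fun j => C^T k j * C j k)) => [|j _]; last first.
    by rewrite [C^T _ _]mxE expr2.
  move/matrixP: coord_orth => /(_ k k); rewrite !mxE eqxx mulr1n => ->.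
  exact/eqP/oner_neq0.
rewrite lt_def sqrf_eq0 => /andP[Cjk _]; exists j; last exact: coord_eigenvalue.
by apply: contraTT Cjk => j_bot; rewrite coord_bottom ?eqxx.
Qed.

End TopEigenspace.

Definition mx_of_rows (R : nzRingType) n (rows : seq (seq R)) : 'M[R]_n :=
  \matrix_(i, j) nth 0 (nth [::] rows i) j.

Definition U_lab (R : fieldType) (r w : R) : 'M[R]_5 := mx_of_rows 5
  [:: [:: 0; r / w;  1 / w;  r / w;  1 / w];
      [:: 0; r / w;  1 / w; -r / w; -1 / w];
      [:: 0; 1 / w; -r / w;  1 / w; -r / w];
      [:: 0; 1 / w; -r / w; -1 / w;  r / w];
      [:: 1; 0; 0; 0; 0]].

Definition lam_lab (R : fieldType) (a b : R) : 'rV[R]_5 :=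
  \row_j [:: 1; 1; 1 - 9 / 2 * a; 1 - 4 * b; 1 - 4 * b - 9 / 2 * a]`_j.

Definition U_ssl (R : fieldType) : 'M[R]_5 := mx_of_rows 5
  [:: [:: 0; 1 / 2;  1 / 2;  1 / 2;  1 / 2];
      [:: 0; 1 / 2;  1 / 2; -1 / 2; -1 / 2];
      [:: 0; 1 / 2; -1 / 2;  1 / 2; -1 / 2];
      [:: 0; 1 / 2; -1 / 2; -1 / 2;  1 / 2];
      [:: 1; 0; 0; 0; 0]].

Definition lam_ssl (R : fieldType) (a b : R) : 'rV[R]_5 :=
  \row_j [:: 1; 1; 1 - 4 * a; 1 - 4 * b; 1 - 4 * b - 4 * a]`_j.

(* In both models index [4] carries the smallest eigenvalue and [k] the
   fourth largest one. *)
Definition top_but (k : nat) : {pred 'I_5} := [pred j : 'I_5 | (j : nat) \notin [:: k; 4%N]].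

Lemma card_top_but k : (k < 4)%N -> #|top_but k| = 3%N.
Proof.
by case: k => [|[|[|[|]]]] // _; rewrite -sum1_card big_mkcond !big_ord_recr big_ord0.
Qed.

Lemma U_lab_orth (R : fieldType) (r w : R) : r ^+ 2 = 2 -> w ^+ 2 = 6 -> w != 0 ->
  (U_lab r w)^T *m U_lab r w = 1%:M.
Proof.
move=> r2 w2 w0; apply/matrixP => i j; rewrite !mxE !big_ord_recr big_ord0 /=.
by case: i => [[|[|[|[|[|i]]]]] hi] //; case: j => [[|[|[|[|[|j]]]]] hj] //;
  rewrite !mxE /=; field: r2 w2; rewrite ?w0.
Qed.

Lemma U_lab_eig (R : rcfType) (a b : R) :
  M_lab a b *m U_lab (Num.sqrt 2) (Num.sqrt 6) =
  U_lab (Num.sqrt 2) (Num.sqrt 6) *m diag_mx (lam_lab a b).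
Proof.
have r2 : Num.sqrt 2 ^+ 2 = 2 :> R by rewrite sqr_sqrtr.
have r0 : Num.sqrt 2 != 0 :> R by rewrite sqrtr_eq0 -ltNge.
have w0 : Num.sqrt 6 != 0 :> R by rewrite sqrtr_eq0 -ltNge.
rewrite /M_lab; move: (Num.sqrt 2) (Num.sqrt 6) r2 r0 w0 => r w r2 r0 w0.
apply/matrixP => i j; rewrite mul_mx_diag !mxE !big_ord_recr big_ord0 /=.
by case: i => [[|[|[|[|[|i]]]]] hi] //; case: j => [[|[|[|[|[|j]]]]] hj] //;
  rewrite !mxE /=; field: r2; rewrite ?r0 ?w0.
Qed.

Lemma U_ssl_orth (R : numFieldType) : (U_ssl R)^T *m U_ssl R = 1%:M.
Proof.
apply/matrixP => i j; rewrite !mxE !big_ord_recr big_ord0 /=.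
by case: i => [[|[|[|[|[|i]]]]] hi] //; case: j => [[|[|[|[|[|j]]]]] hj] //;
  rewrite !mxE /=; field.
Qed.

Lemma U_ssl_eig (R : rcfType) (a b : R) : M_ssl a b *m U_ssl R = U_ssl R *m diag_mx (lam_ssl a b).
Proof.
apply/matrixP => i j; rewrite mul_mx_diag !mxE !big_ord_recr big_ord0 /=.
by case: i => [[|[|[|[|[|i]]]]] hi] //; case: j => [[|[|[|[|[|j]]]]] hj] //;
  rewrite !mxE /=; field.
Qed.

Lemma lam_lab_gap (R : realFieldType) (a b : R) : 0 < a -> 0 < b -> 9 / 8 * a != b ->
  let top := top_but (if 9 / 8 * a < b then 3 else 2) in
  forall i j, i \in top -> j \notin top -> lam_lab a b 0 j < lam_lab a b 0 i.
Proof.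
move=> a_gt0 b_gt0 /negPf ab /= i j.
case: i => [[|[|[|[|[|i]]]]] hi] //; case: j => [[|[|[|[|[|j]]]]] hj] //;
  rewrite !inE !mxE /=; case: ltgtP ab => //= ab' _; lra.
Qed.

Lemma lam_ssl_gap (R : realFieldType) (a b : R) : 0 < a -> 0 < b -> a != b ->
  let top := top_but (if a < b then 3 else 2) in
  forall i j, i \in top -> j \notin top -> lam_ssl a b 0 j < lam_ssl a b 0 i.
Proof.
move=> a_gt0 b_gt0 /negPf ab /= i j.
case: i => [[|[|[|[|[|i]]]]] hi] //; case: j => [[|[|[|[|[|j]]]]] hj] //;
  rewrite !inE !mxE /=; case: ltgtP ab => //= ab' _; lra.
Qed.

Lemma gram_diagE (R : pzRingType) m n (A : 'M[R]_(m, n)) (d : 'rV[R]_n) i j :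
  (A *m diag_mx d *m A^T) i j = \sum_k A i k * d 0 k * A j k.
Proof. by rewrite mul_mx_diag mxE; apply: eq_bigr => k _; rewrite !mxE. Qed.

Lemma sqdist_Zmat (R : rcfType) (c : R) (d : 'rV[R]_5) (V : 'M[R]_(5, 3)) (s : 'rV[R]_3) i j :
  (forall k, 0 <= s 0 k) ->
  let W := V *m diag_mx s *m V^T in
  sqdist (Zmat (c *: diag_mx d) V s) i j =
  c ^+ 2 * (d 0 i ^+ 2 * W i i - 2 * d 0 i * d 0 j * W i j + d 0 j ^+ 2 * W j j).
Proof.
move=> s_ge0 W; have Z_E l k : Zmat (c *: diag_mx d) V s l k = c * d 0 l * V l k * Num.sqrt (s 0 k).
  by rewrite /Zmat mul_mx_diag mxE -scalemxAl mxE mul_diag_mx !mxE mulrA.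
rewrite /sqdist /W !gram_diagE !mulr_sumr -sumrB -big_split mulr_sumr.
apply: eq_bigr => k _; rewrite !Z_E /=.
have := sqr_sqrtr (s_ge0 k); move: (Num.sqrt (s 0 k)) => t t2.
by ring: t2.
Qed.

Lemma separability_lab (R : rcfType) (a b : R) (V : 'M[R]_(5, 3)) (s : 'rV[R]_3) :
  0 < a -> a < 2 / 9 -> 0 < b -> b < 1 / 4 -> 9 / 8 * a != b ->
  top3_eigen (M_lab a b) V s ->
  separability (Delta_lab a b) V s = C_lab a b *
    (1 / 2 * (1 - b - 3 / 4 * a) ^+ 2 *
       (if 9 / 8 * a < b then 1 / 2 - 3 / 4 * a else (2 - 4 * b) / 3) + 1).
Proof.
move=> a_gt0 a_lt b_gt0 b_lt ab [V_orth V_eig V_top].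
have r2 : Num.sqrt 2 ^+ 2 = 2 :> R by rewrite sqr_sqrtr.
have w2 : Num.sqrt 6 ^+ 2 = 6 :> R by rewrite sqr_sqrtr.
have r0 : Num.sqrt 2 != 0 :> R by rewrite sqrtr_eq0 -ltNge.
have w0 : Num.sqrt 6 != 0 :> R by rewrite sqrtr_eq0 -ltNge.
have c2 : Num.sqrt (C_lab a b) ^+ 2 = C_lab a b by rewrite sqr_sqrtr // /C_lab; lra.
have U_orth := U_lab_orth r2 w2 w0.
have card_top : #|top_but (if 9 / 8 * a < b then 3 else 2)| = 3%N.
  by apply: card_top_but; case: ifP.
have lam_gap := lam_lab_gap a_gt0 b_gt0 ab.
have s_ge0 k : 0 <= s 0 k.
  have [j] := top_eigenvalue U_orth (U_lab_eig a b) card_top lam_gap V_orth V_eig V_top k.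
  by case: j => [[|[|[|[|[|j]]]]] hj] //; rewrite !inE !mxE /=; case: ifP => //= _ _ ->; lra.
rewrite /separability /Delta_lab !sqdist_Zmat //.
rewrite (gram_top_eigen U_orth (U_lab_eig a b) card_top lam_gap V_orth V_eig V_top).
rewrite !gram_diagE !big_ord_recr !big_ord0 /= !mxE /= !inordK //=.
move: (Num.sqrt 2) (Num.sqrt 6) (Num.sqrt (C_lab a b)) r2 w2 c2 r0 w0 => r w c r2 w2 c2 r0 w0.
by case: (9 / 8 * a < b); rewrite !inE /=; field: r2 w2 c2; rewrite ?r0 ?w0.
Qed.

Lemma separability_ssl (R : rcfType) (a b : R) (V : 'M[R]_(5, 3)) (s : 'rV[R]_3) :
  0 < a -> a < 2 / 9 -> 0 < b -> b < 1 / 4 -> a != b ->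
  top3_eigen (M_ssl a b) V s ->
  separability (Delta_ssl a b) V s = C_ssl a b *
    ((1 - a - b) ^+ 2 * (if a < b then (1 - 2 * a) / 2 else (1 - 2 * b) / 2) + 1).
Proof.
move=> a_gt0 a_lt b_gt0 b_lt ab [V_orth V_eig V_top].
have c2 : Num.sqrt (C_ssl a b) ^+ 2 = C_ssl a b by rewrite sqr_sqrtr // /C_ssl; lra.
have card_top : #|top_but (if a < b then 3 else 2)| = 3%N.
  by apply: card_top_but; case: ifP.
have lam_gap := lam_ssl_gap a_gt0 b_gt0 ab.
have s_ge0 k : 0 <= s 0 k.
  have [j] := top_eigenvalue (U_ssl_orth R) (U_ssl_eig a b) card_top lam_gap V_orth V_eig V_top k.
  by case: j => [[|[|[|[|[|j]]]]] hj] //; rewrite !inE !mxE /=; case: ifP => //= _ _ ->; lra.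
rewrite /separability /Delta_ssl !sqdist_Zmat //.
rewrite (gram_top_eigen (U_ssl_orth R) (U_ssl_eig a b) card_top lam_gap V_orth V_eig V_top).
rewrite !gram_diagE !big_ord_recr !big_ord0 /= !mxE /= !inordK //=.
move: c2; move: (Num.sqrt (C_ssl a b)) => c c2.
by case: (a < b); rewrite !inE /=; field: c2.
Qed.

Lemma separability_closed_form_gap (R : rcfType) (a b : R) :
  0 < a -> a < 2 / 9 -> 0 < b -> b < 1 / 4 ->
  0 < C_lab a b *
        (1 / 2 * (1 - b - 3 / 4 * a) ^+ 2 *
           (if 9 / 8 * a < b then 1 / 2 - 3 / 4 * a else (2 - 4 * b) / 3) + 1)
    - C_ssl a b *
        ((1 - a - b) ^+ 2 * (if a < b then (1 - 2 * a) / 2 else (1 - 2 * b) / 2) + 1).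
Proof.
move=> a_gt0 a_lt b_gt0 b_lt.
set P := (if 9 / 8 * a < b then _ else _); set Pu := (if a < b then _ else _).
have P_ge : 1 / 3 <= P by rewrite /P; case: ifP => _; lra.
have Pu_ge0 : 0 <= Pu by rewrite /Pu; case: ifP => _; lra.
have Pu_le : Pu <= 1 / 2 by rewrite /Pu; case: ifP => _; lra.
set d := 1 - b - 3 / 4 * a; set e := 1 - a - b.
have e_ge0 : 0 <= e by rewrite /e; lra.
have e_le : e <= d by rewrite /d /e; lra.
have d2_le1 : d ^+ 2 <= 1 by rewrite expr2 /d; nra.
have e2_le : e ^+ 2 <= d ^+ 2 by rewrite !expr2; nra.
have C_gt0 : 0 < C_lab a b by rewrite /C_lab; lra.
have Cu_gt0 : 0 < C_ssl a b by rewrite /C_ssl; lra.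
(* Bound [P] below by [1/3] and [e^2 Pu] above by [d^2 / 2]; what is left is
   [2 + 4(a + b) - d^2 (4/3 + 2(a + b)) > 0]. *)
have lab_ge : C_lab a b * (d ^+ 2 / 6 + 1) <= C_lab a b * (1 / 2 * d ^+ 2 * P + 1).
  by rewrite ler_pM2l //; nra.
have ssl_le : C_ssl a b * (e ^+ 2 * Pu + 1) <= C_ssl a b * (d ^+ 2 / 2 + 1).
  by rewrite ler_pM2l //; nra.
have : 0 < C_lab a b * (d ^+ 2 / 6 + 1) - C_ssl a b * (d ^+ 2 / 2 + 1).
  by rewrite /C_lab /C_ssl; nra.
lra.
Qed.

Theorem theorem7 (R : rcfType) (a b : R) :
  0 < a -> a < 2 / 9 -> 0 < b -> b < 1 / 4 ->
  9 / 8 * a != b -> a != b ->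
  forall (V : 'M[R]_(5, 3)) (s : 'rV[R]_3) (Vu : 'M[R]_(5, 3)) (su : 'rV[R]_3),
    top3_eigen (M_lab a b) V s ->
    top3_eigen (M_ssl a b) Vu su ->
    0 < separability (Delta_lab a b) V s - separability (Delta_ssl a b) Vu su.
Proof.
move=> a_gt0 a_lt b_gt0 b_lt lab_ab ssl_ab V s Vu su top_lab top_ssl.
rewrite (separability_lab a_gt0 a_lt b_gt0 b_lt lab_ab top_lab).
rewrite (separability_ssl a_gt0 a_lt b_gt0 b_lt ssl_ab top_ssl).
exact: separability_closed_form_gap.
Qed.
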